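(* Let $N,n,d\ge 1$, $B>0$ and $\epsilon>0$. A dataset is $D=\{D_1,\dots,D_N\}$, where each voter $i\in\{1,\dots,N\}$ holds $D_i=\{\langle X_1^{(i)},Z_1^{(i)}\rangle,\dots,\langle X_n^{(i)},Z_n^{(i)}\rangle\}$ with $X_j^{(i)},Z_j^{(i)}\in\mathbb{R}^d$. For each voter let $$\mathcal{L}(\boldsymbol\beta,D_i)=\sum_{j=1}^n \ln\Phi\big(\boldsymbol\beta^\top (X_j^{(i)}-Z_j^{(i)})\big),\qquad \overline{\boldsymbol\beta}_i(D_i)\in\operatorname*{argmax}_{\boldsymbol\beta\in\mathbb{R}^d:\ \|\boldsymbol\beta\|_1\le B}\mathcal{L}(\boldsymbol\beta,D_i),$$ where $\Phi$ is the standard normal CDF and $\overline{\boldsymbol\beta}_i(D_i)$ is a (deterministically chosen) maximizer. Consider the randomized algorithm (Algorithm 1) that outputs $$\boldsymbol\beta^*(D)=\frac1N\sum_{i=1}^N\overline{\boldsymbol\beta}_i(D_i)+\boldsymbol R,$$ where $\boldsymbol R\in\mathbb{R}^d$ has independent coordinates, each distributed as a zero-mean Laplace random variable with scale $\frac{2B}{N\epsilon}$. Then this algorithm satisfies $\epsilon$-differential privacy both with respect to voter-neighboring datasets (VLCP) and with respect to record-neighboring datasets (RLCP).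
   Context: A randomized algorithm $Y$ satisfies $\epsilon$-differential privacy with respect to a neighboring relation if for every pair of neighboring datasets $D,D'$ and every measurable set $\mathcal{Y}$ of outputs, $\Pr[Y(D)\in\mathcal{Y}]\le e^{\epsilon}\Pr[Y(D')\in\mathcal{Y}]$. Two datasets $D=\{D_1,\dots,D_N\}$ and $D'=\{D_1',\dots,D_N'\}$ (each voter having exactly $n$ records in both) are voter-neighboring if they coincide except for the records of a single voter $i$, whose $n$ records may be changed arbitrarily; they are record-neighboring if they coincide except for a single record of a single voter. The Laplace distribution with scale $\lambda$ has density $\frac{1}{2\lambda}e^{-|x|/\lambda}$. *)

From HB Require Import structures.
From mathcomp Require Import all_boot all_order all_algebra.
From mathcomp Require Import all_classical all_reals all_analysis.
Set Implicit Arguments. Unset Strict Implicit. Unset Printing Implicit Defensive.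
Import Order.TTheory GRing.Theory Num.Theory.
Import numFieldNormedType.Exports.
Local Open Scope classical_set_scope.
Local Open Scope ring_scope.

Section Defs.
Variable R : realType.

Definition Phi (x : R) : R :=
  fine (\int[@lebesgue_measure R]_(t in `]-oo, x]) (normal_pdf 0 1 t)%:E)%E.

Definition dotv d (u v : 'rV[R]_d) : R := \sum_(k < d) u ord0 k * v ord0 k.
Definition l1norm d (u : 'rV[R]_d) : R := \sum_(k < d) `|u ord0 k|.

Definition voter_data n d := 'I_n -> 'rV[R]_d * 'rV[R]_d.
Definition dataset N n d := 'I_N -> voter_data n d.

Definition loglik n d (beta : 'rV[R]_d) (Di : voter_data n d) : R :=
  \sum_(j < n) ln (Phi (dotv beta ((Di j).1 - (Di j).2))).

Definition is_argmax n d (B : R) (Di : voter_data n d) (b : 'rV[R]_d) : Prop :=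
  l1norm b <= B /\
  forall beta : 'rV[R]_d, l1norm beta <= B -> loglik beta Di <= loglik b Di.

Definition laplace_pdf (lam x : R) : R := (2 * lam)^-1 * expR (- `|x| / lam).

Fixpoint iter_int (k : nat) (F : (nat -> R) -> \bar R) : \bar R :=
  match k with
  | 0 => F (fun _ => 0)
  | k'.+1 => (\int[@lebesgue_measure R]_x
               iter_int k' (fun r => F (fun i => if i == k' then x else r i)))%E
  end.

(* Pr[ m + Rnoise \in A ], Rnoise with iid Laplace(0, lam) coordinates:
   the integral over R^d of 1_A(m + r) * prod_k laplace_pdf lam (r_k) *)
Definition laplace_mech_prob d (lam : R) (m : 'rV[R]_d) (A : set 'rV[R]_d)
  : \bar R :=
  iter_int d (fun r =>
    (\1_A (m + \row_(k < d) r k) * \prod_(k < d) laplace_pdf lam (r k))%:E).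

(* Borel sets of R^d: sigma-algebra generated by products of Borel sets *)
Definition rV_boxes d : set (set 'rV[R]_d) :=
  [set S | exists I : 'I_d -> set R,
     (forall k, measurable (I k)) /\ S = [set v : 'rV[R]_d | forall k, I k (v ord0 k)]].
Definition rV_measurable d (A : set 'rV[R]_d) : Prop := <<s @rV_boxes d >> A.

Definition agg_mean N n d (bbar : 'I_N -> voter_data n d -> 'rV[R]_d)
  (D : dataset N n d) : 'rV[R]_d :=
  N%:R^-1 *: \sum_(i < N) bbar i (D i).

Definition voter_neighbor N n d (D D' : dataset N n d) : Prop :=
  exists i : 'I_N, forall i' : 'I_N, i' != i -> D i' = D' i'.

Definition record_neighbor N n d (D D' : dataset N n d) : Prop :=
  exists (i : 'I_N) (j : 'I_n), forall (i' : 'I_N) (j' : 'I_n),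
    (i', j') != (i, j) -> D i' j' = D' i' j'.

Definition alg1_dp N n d (bbar : 'I_N -> voter_data n d -> 'rV[R]_d)
  (lam eps : R) (nb : dataset N n d -> dataset N n d -> Prop) : Prop :=
  forall D D' : dataset N n d, nb D D' ->
  forall A : set 'rV[R]_d, rV_measurable A ->
    (laplace_mech_prob lam (agg_mean bbar D) A
       <= (expR eps)%:E * laplace_mech_prob lam (agg_mean bbar D') A)%E.

End Defs.

From HB Require Import structures.
From mathcomp Require Import all_boot all_order all_algebra.
From mathcomp Require Import all_classical all_reals all_analysis.
From mathcomp Require Import measurable_realfun lra.
Import Order.TTheory GRing.Theory Num.Theory.
Local Open Scope classical_set_scope.
Local Open Scope ring_scope.

(* Every maximizer lies in the l1-ball of radius B, so changing the data of one
   voter (in particular one record) moves the mean of the maximizers by at most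
   2B/N in l1 norm.  Translating the noise by that difference changes the
   product Laplace density pointwise by a factor at most exp(eps), and Lebesgue
   measure is translation invariant; integrating coordinate by coordinate gives
   the bound for every output set, measurable or not. *)

Section lebesgue_shift.
Context {R : realType} (c : R).
Local Notation mu := (@lebesgue_measure R).
Local Notation shiftc := (shift c : measurableTypeR R -> measurableTypeR R).

Lemma measurable_shift : measurable_fun [set: measurableTypeR R] (shift c).
Proof.
by apply: continuous_measurable_fun => x; apply: cvgD; [exact: cvg_id|exact: cvg_cst].
Qed.

HB.instance Definition _ := isMeasurableFun.Build _ _ _ _ shiftc measurable_shift.

Lemma lebesgue_measure_shift (A : set R) : measurable A -> mu (shift c @^-1` A) = mu A.
Proof.
move=> mA; symmetry.
apply: (@lebesgue_measure_unique R (pushforward mu shiftc)) => // _ [[a b] _ <-] /=.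
have -> : pushforward mu shiftc `]a, b] = mu `](a - c), (b - c)]%classic.
  congr (mu _); apply/seteqP; split => x /=;
  by rewrite /shift !in_itv /= ?lerBrDr ?ltrBlDr ?lerBlDr ?ltrBrDr.
rewrite !lebesgue_measure_itv /= !lte_fin ltrD2r; case: ifP => // _.
by rewrite -EFinD; congr (_%:E); lra.
Qed.

Lemma ge0_integral_shift (f : R -> \bar R) : measurable_fun [set: R] f ->
  (forall x, 0 <= f x)%E -> (\int[mu]_x f (x + c)%R = \int[mu]_x f x)%E.
Proof.
move=> mf f0.
have := @ge0_integral_pushforward _ _ _ _ R shiftc measurable_shift mu setT f
  measurableT mf (fun y _ => f0 y).
rewrite preimage_setT => <-.
by apply: eq_measure_integral => A mA _; exact: lebesgue_measure_shift.
Qed.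
End lebesgue_shift.

Section nonneg_integral_comparison.
Import HBNNSimple.
Context {R : realType}.
Local Notation mu := (@lebesgue_measure R).
Local Open Scope ereal_scope.

(* No measurability is needed: the integral of a nonnegative function is the
   supremum of the integrals of its simple minorants. *)
Lemma ge0_le_integralT (f g : R -> \bar R) : (forall x, 0 <= f x) ->
  (forall x, f x <= g x) -> \int[mu]_x f x <= \int[mu]_x g x.
Proof.
move=> f0 fg; have g0 x : 0 <= g x by exact: le_trans (f0 x) (fg x).
rewrite (ge0_integralTE mu f0) (ge0_integralTE mu g0).
apply: ge_ereal_sup => _ [h hf <-]; apply: ereal_sup_ubound; exists h => //.
by move=> x; exact: le_trans (hf x) (fg x).
Qed.

Lemma ge0_le_integral_shift (f g : R -> \bar R) (a c : R) : (0 < a)%R ->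
  (forall x, 0 <= f x) -> (forall x, 0 <= g x) ->
  (forall x, f x <= a%:E * g (x + c)%R) ->
  \int[mu]_x f x <= a%:E * \int[mu]_x g x.
Proof.
move=> a0 f0 g0 fg; rewrite (ge0_integralTE mu f0).
apply: ge_ereal_sup => _ [h hf <-]; rewrite -integralT_nnsfun.
have mh : measurable_fun [set: measurableTypeR R] (EFin \o h).
  by apply/measurable_EFinP; exact: measurable_funPT.
rewrite -(ge0_integral_shift (- c)%R (EFin \o h)) //; last by move=> x; rewrite lee_fin.
have -> : \int[mu]_x (h (x - c)%R)%:E = a%:E * \int[mu]_x (a^-1 * h (x - c))%:E.
  under [in RHS]eq_integral do rewrite EFinM.
  rewrite ge0_integralZl //.
  - by rewrite muleA -EFinM divff ?gt_eqF // mul1e.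
  - apply/measurable_EFinP.
    exact: measurableT_comp (measurable_funPT h) (measurable_shift (- c)%R).
  - by move=> x _; rewrite lee_fin.
  - by rewrite lee_fin invr_ge0 ltW.
rewrite lee_pmul2l ?lte_fin //.
apply: ge0_le_integralT => x.
  by rewrite lee_fin mulr_ge0 ?fun_ge0 // invr_ge0 ltW.
have := le_trans (hf (x - c)%R) (fg (x - c)%R); rewrite subrK => hg.
by rewrite -(@lee_pmul2l _ a%:E) ?lte_fin // EFinM muleA -EFinM mulfV ?gt_eqF // mul1r.
Qed.
End nonneg_integral_comparison.

Section iterated_integral.
Context {R : realType}.
Local Open Scope ereal_scope.

Lemma iter_int_ge0 k (F : (nat -> R) -> \bar R) :
  (forall r, 0 <= F r) -> 0 <= iter_int k F.
Proof.
elim: k F => [|k IHk] F F0 /=; first exact: F0.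
by apply: integral_ge0 => x _; apply: IHk => r; exact: F0.
Qed.

Lemma iter_int_le_shift k (F G : (nat -> R) -> \bar R) (a : R) (c : nat -> R) :
  (0 < a)%R -> (forall r, 0 <= F r) -> (forall r, 0 <= G r) ->
  (forall r, F r <= a%:E * G (fun i => if (i < k)%N then (r i + c i)%R else r i)) ->
  iter_int k F <= a%:E * iter_int k G.
Proof.
elim: k F G => [|k IHk] F G a0 F0 G0 FG /=; first exact: FG.
apply: (@ge0_le_integral_shift _ _ _ a (c k)) => // [x|x|x].
- by apply: iter_int_ge0 => r; exact: F0.
- by apply: iter_int_ge0 => r; exact: G0.
apply: IHk => // r; have := FG (fun i => if i == k then x else r i).
congr (_ <= _ * G _); apply/funext => i.
by rewrite ltnS leq_eqVlt; case: eqVneq => [->|].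
Qed.
End iterated_integral.

Section laplace_mechanism.
Context {R : realType}.

Lemma laplace_pdf_ge0 (lam x : R) : 0 <= lam -> 0 <= laplace_pdf lam x.
Proof. by move=> lam0; rewrite mulr_ge0 ?expR_ge0 // invr_ge0 mulr_ge0. Qed.

Lemma laplace_pdf_le_shift (lam x c : R) : 0 < lam ->
  laplace_pdf lam x <= expR (`|c| / lam) * laplace_pdf lam (x + c).
Proof.
move=> lam0; rewrite /laplace_pdf mulrCA -expRD.
apply: ler_wpM2l; first by rewrite invr_ge0 mulr_ge0 ?ltW.
by rewrite ler_expR -mulrDl ler_pM2r ?invr_gt0 //; have := ler_normD x c; lra.
Qed.

Lemma prod_laplace_pdf_le_shift (I : finType) (lam : R) (r c : I -> R) : 0 < lam ->
  \prod_k laplace_pdf lam (r k) <=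
  expR ((\sum_k `|c k|) / lam) * \prod_k laplace_pdf lam (r k + c k).
Proof.
move=> lam0; rewrite mulr_suml expR_sum -big_split /=.
apply: ler_prod => k _; apply/andP; split; first exact: laplace_pdf_ge0 (ltW lam0).
exact: laplace_pdf_le_shift.
Qed.

Lemma laplace_mech_prob_le d (lam eps : R) (m m' : 'rV[R]_d) (A : set 'rV[R]_d) :
  0 < lam -> l1norm (m - m') <= lam * eps ->
  (laplace_mech_prob lam m A <= (expR eps)%:E * laplace_mech_prob lam m' A)%E.
Proof.
move=> lam0 mm'; pose c i := oapp (fun k : 'I_d => (m - m') ord0 k) 0 (insub i).
have cE (k : 'I_d) : c k = (m - m') ord0 k by rewrite /c valK.
have pdf_ge0 (r : nat -> R) : 0 <= \prod_(k < d) laplace_pdf lam (r k).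
  by apply: prodr_ge0 => k _; exact: laplace_pdf_ge0 (ltW lam0).
apply: (@iter_int_le_shift _ d _ _ _ c) => [|r|r|r]; rewrite ?expR_gt0 ?lee_fin ?mulr_ge0 //.
have -> : m' + \row_(k < d) (if (k < d)%N then r k + c k else r k) = m + \row_k r k.
  by apply/rowP => k; rewrite !mxE ltn_ord cE !mxE; lra.
rewrite mulrCA; apply: ler_wpM2l; first by rewrite indicE.
under [X in _ <= _ * X]eq_bigr do rewrite ltn_ord.
apply: le_trans (prod_laplace_pdf_le_shift _ lam (fun k : 'I_d => r k) (fun k => c k) lam0) _.
apply: ler_wpM2r; first by apply: prodr_ge0 => k _; exact: laplace_pdf_ge0 (ltW lam0).
rewrite ler_expR ler_pdivrMr // mulrC; apply: le_trans mm'.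
by under eq_bigr do rewrite cE.
Qed.
End laplace_mechanism.

Section l1norm.
Context {R : realType} {d : nat}.
Implicit Types u v : 'rV[R]_d.

Lemma l1normZ (a : R) u : l1norm (a *: u) = `|a| * l1norm u.
Proof. by rewrite /l1norm mulr_sumr; apply: eq_bigr => k _; rewrite mxE normrM. Qed.

Lemma l1normB_le u v : l1norm (u - v) <= l1norm u + l1norm v.
Proof.
by rewrite /l1norm -big_split; apply: ler_sum => k _; rewrite !mxE ler_normB.
Qed.
End l1norm.

Section sensitivity.
Context {R : realType}.
Variables (N n d : nat) (bbar : 'I_N -> voter_data R n d -> 'rV[R]_d).

Lemma agg_meanB_voter_neighbor (D D' : dataset R N n d) :
  voter_neighbor D D' -> exists i,
    agg_mean bbar D - agg_mean bbar D' = N%:R^-1 *: (bbar i (D i) - bbar i (D' i)).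
Proof.
move=> [i DD']; exists i.
rewrite /agg_mean -scalerBr (bigD1 i) //= [X in _ - X](bigD1 i) //=.
rewrite (eq_bigr (fun j => bbar j (D' j))) => [|j /DD' -> //].
by rewrite opprD addrACA subrr addr0.
Qed.

Lemma agg_mean_sensitivity (B : R) (D D' : dataset R N n d) :
  (forall i Di, l1norm (bbar i Di) <= B) -> voter_neighbor D D' ->
  l1norm (agg_mean bbar D - agg_mean bbar D') <= 2 * B / N%:R.
Proof.
move=> bbarB /agg_meanB_voter_neighbor [i ->].
rewrite l1normZ ger0_norm ?invr_ge0 // mulrC; apply: ler_wpM2r; first by rewrite invr_ge0.
apply: le_trans (l1normB_le _ _) _.
by have := bbarB i (D i); have := bbarB i (D' i); lra.
Qed.
End sensitivity.

Lemma record_neighbor_voter_neighbor {R : realType} N n d (D D' : dataset R N n d) :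
  record_neighbor D D' -> voter_neighbor D D'.
Proof.
move=> [i [j DD']]; exists i => i' i'i; apply/funext => j'.
by apply: DD'; rewrite xpair_eqE negb_and i'i.
Qed.

Lemma alg1_dp_sub {R : realType} N n d (bbar : 'I_N -> voter_data R n d -> 'rV[R]_d)
    (lam eps : R) (nb nb' : dataset R N n d -> dataset R N n d -> Prop) :
  (forall D D', nb' D D' -> nb D D') -> alg1_dp bbar lam eps nb -> alg1_dp bbar lam eps nb'.
Proof. by move=> nb'nb dp D D' /nb'nb; exact: dp. Qed.

Theorem theorem1 (R : realType) (N n d : nat) (B eps : R)
  (hN : (1 <= N)%N) (hn : (1 <= n)%N) (hd : (1 <= d)%N)
  (hB : 0 < B) (heps : 0 < eps)
  (bbar : 'I_N -> voter_data R n d -> 'rV[R]_d)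
  (hbbar : forall (i : 'I_N) (Di : voter_data R n d), is_argmax B Di (bbar i Di)) :
  alg1_dp bbar (2 * B / (N%:R * eps)) eps (@voter_neighbor R N n d) /\
  alg1_dp bbar (2 * B / (N%:R * eps)) eps (@record_neighbor R N n d).
Proof.
have N0 : 0 < N%:R :> R by rewrite ltr0n.
have lam0 : 0 < 2 * B / (N%:R * eps) by rewrite divr_gt0 ?mulr_gt0.
have lam_eps : 2 * B / (N%:R * eps) * eps = 2 * B / N%:R.
  by rewrite invfM mulrA mulfVK ?gt_eqF.
have voter_dp : alg1_dp bbar (2 * B / (N%:R * eps)) eps (@voter_neighbor R N n d).
  move=> D D' DD' A _; apply: laplace_mech_prob_le => //; rewrite lam_eps.
  by apply: agg_mean_sensitivity DD' => i Di; case: (hbbar i Di).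
split=> //; apply: alg1_dp_sub voter_dp; exact: record_neighbor_voter_neighbor.
Qed.
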